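(* Suppose Assumptions 3 and 5 hold. Then: (i) for each $n$, $z\mapsto m_n(z)$ is non-increasing on $(0,\infty)$, and for every fixed $z\in(0,1)$, $m_n(z)\to\infty$ as $n\to\infty$; (ii) if there exist constants $k>1$, $\eta<1$ and $K>1$ such that $\theta_{n,\lfloor kl_n\rfloor}/\theta_{n,l_n}\le\eta$ for all $n\ge K$ and every integer sequence $(l_n)$ with $l_n\to\infty$ and $l_n\le d_n$ (with $\theta_{n,m}:=0$ for $m>q_n$), then $m_n(z_1)\asymp m_n(z_2)$ for any fixed $z_1,z_2\in(0,1)$.
   Context: For each $n$, let $\boldsymbol\mu\in\mathbb R^n$, $\boldsymbol\Omega$ positive definite, integers $0=\nu_0<\cdots<\nu_{q_n}$, and nested projection matrices $\mathbf P_m=\mathbf X_m(\mathbf X_m^\top\mathbf X_m)^{-1}\mathbf X_m^\top$ ($\mathbf X_m$ the first $\nu_m$ columns of a fixed full-rank design, $\mathbf P_0=\mathbf 0$) be given. Define $\theta_{n,m}=\dfrac{n^{-1}\boldsymbol\mu^\top(\mathbf P_m-\mathbf P_{m-1})\boldsymbol\mu}{\mathrm{tr}\{(\mathbf P_m-\mathbf P_{m-1})\boldsymbol\Omega\}}$ for $m=1,\dots,q_n$, and $d_n=\max\{m:\theta_{n,m}>0\}$. For $z\in(0,1)$, $m_n(z)=\max\big(\{1\}\cup\{m\in\{2,\dots,q_n\}:\theta_{n,m}>\tfrac{z}{(1-z)n}\}\big)$, and $m_n(z)=1$ for $z\ge1$. Assumption 3: for each large $n$, $\theta_{n,1}\ge\cdots\ge\theta_{n,q_n}$.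 Assumption 5: for every fixed positive integer $m$ there are constants $\bar\theta_m>0$ and $K_m>0$ such that for all $n\ge K_m$, $m\le d_n$ and $\theta_{n,m}\ge\bar\theta_m$. Notation: $a_n\asymp b_n$ means $a_n/b_n$ and $b_n/a_n$ are bounded for large $n$. *)

From HB Require Import structures.
From mathcomp Require Import all_boot all_order all_algebra.
From mathcomp Require Import reals.
Set Implicit Arguments. Unset Strict Implicit. Unset Printing Implicit Defensive.
Import Order.TTheory GRing.Theory Num.Theory.
Local Open Scope ring_scope.

(* The data, for every sample size n:
   - mu n    : the mean vector in R^n,
   - Omega n : an n x n (positive definite) matrix,
   - q n     : the number q_n of nested models,
   - nu n m  : the integers nu_0 < ... < nu_{q_n} (nu n 0 = 0),
   - X n i j : entry (i, j) of the fixed design matrix (row i < n, column j);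
               X_m is formed by the first nu_m columns. *)
Section Setting.
Variable R : realType.
Variable mu : forall n : nat, 'cV[R]_n.
Variable Omega : forall n : nat, 'M[R]_n.
Variable q : nat -> nat.
Variable nu : nat -> nat -> nat.
Variable X : forall n : nat, 'I_n -> nat -> R.

Definition Xm (n m : nat) : 'M[R]_(n, nu n m) :=
  \matrix_(i < n, j < nu n m) X i j.

Definition Pm (n m : nat) : 'M[R]_n :=
  if m is 0 then 0
  else Xm n m *m invmx ((Xm n m)^T *m Xm n m) *m (Xm n m)^T.

Definition theta (n m : nat) : R :=
  ((n%:R)^-1 * ((mu n)^T *m (Pm n m - Pm n m.-1) *m mu n) ord0 ord0)
  / \tr ((Pm n m - Pm n m.-1) *m Omega n).

Definition theta_ext (n m : nat) : R :=
  if (1 <= m <= q n)%N then theta n m else 0.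

Definition dn (n : nat) : nat :=
  \max_(1 <= m < (q n).+1 | 0 < theta n m) m.

Definition mn (n : nat) (z : R) : nat :=
  if z < 1 then
    maxn 1 (\max_(2 <= m < (q n).+1 | z / ((1 - z) * n%:R) < theta n m) m)
  else 1%N.

End Setting.

Definition pos_def (R : realType) (n : nat) (A : 'M[R]_n) : Prop :=
  A^T = A /\ forall x : 'cV[R]_n, x != 0 -> 0 < (x^T *m A *m x) ord0 ord0.

From Pilot Require Import Defs.
From HB Require Import structures.
From mathcomp Require Import all_boot all_order all_algebra.
From mathcomp Require Import reals.
From mathcomp Require Import ring lra.
Set Implicit Arguments. Unset Strict Implicit. Unset Printing Implicit Defensive.
Import Order.TTheory GRing.Theory Num.Theory archimedean.Num.Theory.
Local Open Scope ring_scope.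

(* (i) The threshold z / ((1 - z) n) increases with z, so the set of admissible
   indices shrinks as z grows; it also tends to 0, while by Assumption 5 each
   fixed theta_{n,m} stays above a positive constant, so m_n(z) eventually
   exceeds any fixed m.
   (ii) Start at m_n(z2) + 1, whose theta lies below the z2-threshold, and apply
   m |-> floor (k m) J times.  As long as the iterates stay below d_n, each step
   multiplies theta by at most eta, so the J-th iterate has theta at most
   eta^J c times the z1-threshold, c being the fixed ratio of the two
   thresholds.  With eta^J c <= 1 and theta non-increasing, no index beyond that
   iterate is z1-admissible, whence m_n(z2) <= m_n(z1) < k^J (m_n(z2) + 1). *)

Lemma bernoulli_le (R : realFieldType) (x : R) (n : nat) : 0 <= x ->
  1 + n%:R * x <= (1 + x) ^+ n.
Proof.
move=> x_ge0; elim: n => [|n IHn]; first by rewrite mul0r addr0 expr0.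
have nx_ge0 : 0 <= n%:R * x by rewrite mulr_ge0.
have pow_ge0 : 0 <= (1 + x) ^+ n by rewrite exprn_ge0 // addr_ge0.
rewrite exprS -natr1; nra.
Qed.

Lemma exists_expr_mul_le1 (R : archiRealFieldType) (e c : R) :
  0 <= e -> e < 1 -> 0 <= c -> exists n : nat, e ^+ n * c <= 1.
Proof.
move=> e_ge0 e_lt1 c_ge0.
have [->|e_neq0] := eqVneq e 0; first by exists 1%N; rewrite expr1 mul0r ler01.
have x_gt0 : 0 < e^-1 - 1 by rewrite subr_gt0 invf_gt1 // lt0r e_neq0.
set n := (Num.truncn (c / (e^-1 - 1))).+1.
exists n.
have c_lt : c < n%:R * (e^-1 - 1) by rewrite -ltr_pdivrMr // truncnS_gt.
have c_le : c <= e^-1 ^+ n.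
  have := bernoulli_le n (ltW x_gt0).
  rewrite (_ : 1 + (e^-1 - 1) = e^-1); last by ring.
  lra.
apply: le_trans (ler_wpM2l (exprn_ge0 n e_ge0) c_le) _.
by rewrite -exprMn mulfV // expr1n.
Qed.

Lemma leq_iter (f : nat -> nat) (a i j : nat) : (forall b, b <= f b)%N ->
  (i <= j)%N -> (iter i f a <= iter j f a)%N.
Proof.
move=> f_ge le_ij; rewrite -(subnK le_ij) iterD.
by elim: (j - i)%N => [|m IHm] //=; apply: leq_trans IHm (f_ge _).
Qed.

Definition diverges (l : nat -> nat) : Prop :=
  forall M : nat, exists N : nat, forall n, (N <= n)%N -> (M <= l n)%N.

Lemma diverges_leq (l l' : nat -> nat) :
  diverges l -> (forall n, l n <= l' n)%N -> diverges l'.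
Proof.
by move=> l_div le_ll' M; have [N HN] := l_div M; exists N => n /HN /leq_trans; apply.
Qed.

Lemma diverges_minn (l l' : nat -> nat) :
  diverges l -> diverges l' -> diverges (fun n => minn (l n) (l' n)).
Proof.
move=> l_div l'_div M; have [N HN] := l_div M; have [N' HN'] := l'_div M.
by exists (maxn N N') => n; rewrite geq_max leq_min => /andP[/HN -> /HN' ->].
Qed.

Section ScaleFloor.
Variables (R : archiRealFieldType) (k : R).

Definition scale_floor (a : nat) : nat := Num.truncn (k * a%:R).

Lemma leq_scale_floor a : 1 <= k -> (a <= scale_floor a)%N.
Proof.
move=> k_ge1; rewrite /scale_floor -{1}(natrK (R := R) a).
by apply: le_truncn; rewrite ler_peMl.
Qed.

Lemma iter_scale_floor_le i a : 0 <= k ->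
  (iter i scale_floor a)%:R <= k ^+ i * a%:R.
Proof.
move=> k_ge0; elim: i => [|i IHi]; first by rewrite mul1r.
rewrite iterS exprS -mulrA /scale_floor.
have := truncn_le (k * (iter i scale_floor a)%:R).
by rewrite mulr_ge0 // => /le_trans; apply; rewrite ler_wpM2l.
Qed.

End ScaleFloor.

Definition threshold (R : realFieldType) (z : R) (n : nat) : R :=
  z / ((1 - z) * n%:R).

Section Threshold.
Variable R : archiRealFieldType.
Implicit Types (z t : R) (n : nat).

Lemma threshold_gt0 z n : 0 < z -> z < 1 -> (0 < n)%N -> 0 < threshold z n.
Proof. by move=> z_gt0 z_lt1 n_gt0; rewrite divr_gt0 ?mulr_gt0 ?subr_gt0 ?ltr0n. Qed.

Lemma threshold_le z1 z2 n : 0 < z1 -> z1 <= z2 -> z2 < 1 ->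
  threshold z1 n <= threshold z2 n.
Proof.
move=> z1_gt0 le_z12 z2_lt1; rewrite /threshold.
have [->|n_gt0] := posnP n; first by rewrite !mulr0 !invr0 !mulr0.
have n_pos : 0 < n%:R :> R by rewrite ltr0n.
rewrite ler_pdivrMr ?mulr_gt0 ?subr_gt0 //; last by lra.
rewrite mulrAC ler_pdivlMr ?mulr_gt0 ?subr_gt0 //; nra.
Qed.

Lemma threshold_ratio z1 z2 n : 0 < z1 -> z1 < 1 -> z2 < 1 -> (0 < n)%N ->
  threshold z2 n = (z2 / (1 - z2)) / (z1 / (1 - z1)) * threshold z1 n.
Proof.
move=> z1_gt0 z1_lt1 z2_lt1 n_gt0; rewrite /threshold; field.
by rewrite !gt_eqF ?subr_gt0 ?ltr0n.
Qed.

Lemma threshold_eventually_lt z t : 0 < z -> z < 1 -> 0 < t ->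
  exists N : nat, forall n, (N <= n)%N -> threshold z n < t.
Proof.
move=> z_gt0 z_lt1 t_gt0; exists (Num.truncn (z / ((1 - z) * t))).+1 => n le_Nn.
have zt_gt0 : 0 < (1 - z) * t by rewrite mulr_gt0 ?subr_gt0.
have n_gt0 : 0 < n%:R :> R by rewrite ltr0n (leq_trans _ le_Nn).
have : z / ((1 - z) * t) < n%:R.
  by apply: lt_le_trans (truncnS_gt _) _; rewrite ler_nat.
rewrite /threshold ltr_pdivrMr // ltr_pdivrMr ?mulr_gt0 ?subr_gt0 //.
by rewrite mulrCA mulrA [t * _]mulrC.
Qed.

End Threshold.

Section Selection.
Variables (R : realType) (mu : forall n : nat, 'cV[R]_n)
  (Omega : forall n : nat, 'M[R]_n) (q : nat -> nat) (nu : nat -> nat -> nat)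
  (X : forall n : nat, 'I_n -> nat -> R).

Local Notation theta := (theta mu Omega nu X).
Local Notation theta_ext := (theta_ext mu Omega q nu X).
Local Notation dn := (dn mu Omega q nu X).
Local Notation mn := (mn mu Omega q nu X).

Lemma mn_ge1 n z : (1 <= mn n z)%N.
Proof. by rewrite /Defs.mn; case: ifP => // _; apply: leq_maxl. Qed.

Lemma mn_ge n z m : z < 1 -> (2 <= m <= q n)%N -> threshold z n < theta n m ->
  (m <= mn n z)%N.
Proof.
move=> z_lt1 /andP[m_ge2 m_le] lt_th; rewrite /Defs.mn z_lt1.
apply: leq_trans (leq_maxr 1 _); apply: (leq_bigmax_seq m) lt_th.
by rewrite mem_index_iota m_ge2 ltnS.
Qed.

Lemma mn_le n z c : z < 1 -> (1 <= c)%N ->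
  (forall m, (2 <= m <= q n)%N -> threshold z n < theta n m -> (m <= c)%N) ->
  (mn n z <= c)%N.
Proof.
move=> z_lt1 c_ge1 Hc; rewrite /Defs.mn z_lt1 geq_max c_ge1.
by apply/bigmax_leqP_seq => m; rewrite mem_index_iota ltnS; apply: Hc.
Qed.

Lemma theta_le_threshold n z m : z < 1 -> (mn n z < m <= q n)%N ->
  theta n m <= threshold z n.
Proof.
move=> z_lt1 /andP[lt_mn m_le]; rewrite leNgt; apply/negP => /(mn_ge z_lt1).
by rewrite (leq_trans _ lt_mn) ?ltnS ?mn_ge1 ?m_le // => /(_ isT); rewrite leqNgt lt_mn.
Qed.

Lemma dn_ge n m : (1 <= m <= q n)%N -> 0 < theta n m -> (m <= dn n)%N.
Proof.
move=> /andP[m_ge1 m_le] th_gt0; apply: (leq_bigmax_seq m) th_gt0.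
by rewrite mem_index_iota m_ge1 ltnS.
Qed.

Lemma dn_le_q n : (dn n <= q n)%N.
Proof. by apply/bigmax_leqP_seq => m; rewrite mem_index_iota ltnS => /andP[]. Qed.

Lemma theta_extE n m : (1 <= m <= q n)%N -> theta_ext n m = theta n m.
Proof. by rewrite /Defs.theta_ext => ->. Qed.

Lemma mn_nonincreasing n z1 z2 : 0 < z1 -> z1 <= z2 -> (mn n z2 <= mn n z1)%N.
Proof.
move=> z1_gt0 le_z12; have [z2_lt1|z2_ge1] := ltP z2 1; last first.
  by rewrite /Defs.mn ltNge z2_ge1 mn_ge1.
apply: mn_le (mn_ge1 _ _) _ => // m m_range lt_th.
have z1_lt1 : z1 < 1 by lra.
apply: (mn_ge z1_lt1 m_range); apply: le_lt_trans lt_th.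
exact: threshold_le.
Qed.

Section Assumption5.
Hypothesis assumption5 : forall m : nat, (1 <= m)%N ->
  exists thetabar : R, 0 < thetabar /\
  exists K : nat, forall n, (K <= n)%N -> (m <= dn n)%N /\ thetabar <= theta n m.

Lemma dn_diverges : diverges dn.
Proof.
move=> M; have [? [_ [K HK]]] := assumption5 (leq_maxr M 1).
by exists K => n /HK[M_le _]; apply: leq_trans (leq_maxl M 1) M_le.
Qed.

Lemma mn_diverges z : 0 < z -> z < 1 -> diverges (mn ^~ z).
Proof.
move=> z_gt0 z_lt1 M; have [M_le1|M_gt1] := leqP M 1.
  by exists 0%N => n _; apply: leq_trans M_le1 (mn_ge1 n z).
have [thb [thb_gt0 [K HK]]] := assumption5 (ltnW M_gt1).
have [N HN] := threshold_eventually_lt z_gt0 z_lt1 thb_gt0.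
exists (maxn K N) => n; rewrite geq_max => /andP[le_Kn le_Nn].
have [M_le_dn thb_le] := HK n le_Kn.
apply: mn_ge z_lt1 _ _; first by rewrite M_gt1 (leq_trans M_le_dn (dn_le_q n)).
exact: lt_le_trans (HN n le_Nn) thb_le.
Qed.

Section Decay.
Variables (N3 : nat) (k eta : R) (K : nat).
Hypothesis assumption3 : forall n, (N3 <= n)%N -> forall m, (1 <= m)%N -> (m < q n)%N ->
  theta n m.+1 <= theta n m.
Hypotheses (k_gt1 : 1 < k) (eta_ge0 : 0 <= eta) (eta_lt1 : eta < 1).
Hypothesis decay : forall l : nat -> nat, diverges l -> (forall n, (l n <= dn n)%N) ->
  forall n, (K <= n)%N -> theta_ext n (scale_floor k (l n)) / theta_ext n (l n) <= eta.

Local Notation step := (scale_floor k).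

Let step_ge b : (b <= step b)%N.
Proof. exact/leq_scale_floor/ltW. Qed.

Lemma theta_antitone n a b : (N3 <= n)%N -> (1 <= a)%N -> (a <= b <= q n)%N ->
  theta n b <= theta n a.
Proof.
move=> le_N3n a_ge1 /andP[]; elim: b => [|b IHb]; first by case: a a_ge1.
rewrite leq_eqVlt => /predU1P[-> //|lt_ab] b_lt.
apply: le_trans (IHb lt_ab (ltnW b_lt)).
exact: assumption3 (leq_trans a_ge1 lt_ab) b_lt.
Qed.

Lemma theta_step_le l n : diverges l -> (K <= n)%N -> (1 <= l n)%N ->
  (step (l n) <= dn n)%N -> 0 < theta n (l n) ->
  theta n (step (l n)) <= eta * theta n (l n).
Proof.
move=> l_div le_Kn l_ge1 step_le th_gt0.
have l_le_dn : (l n <= dn n)%N := leq_trans (step_ge _) step_le.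
have /= := decay (diverges_minn l_div dn_diverges) (fun n => geq_minr _ _) le_Kn.
rewrite (minn_idPl l_le_dn) !theta_extE ?(ler_pdivrMr _ _ th_gt0) 1?mulrC //.
  by rewrite l_ge1 (leq_trans l_le_dn (dn_le_q n)).
by rewrite (leq_trans l_ge1 (step_ge _)) (leq_trans step_le (dn_le_q n)).
Qed.

Lemma theta_iter_le l n i : diverges l -> (K <= n)%N -> (N3 <= n)%N -> (1 <= l n)%N ->
  (iter i step (l n) <= dn n)%N -> 0 < theta n (iter i step (l n)) ->
  theta n (iter i step (l n)) <= eta ^+ i * theta n (l n).
Proof.
move=> l_div le_Kn le_N3n l_ge1; elim: i => [|i IHi] iter_le th_gt0.
  by rewrite mul1r.
have l_le_iter j : (l n <= iter j step (l n))%N := leq_iter _ step_ge (leq0n j).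
set b := iter i step (l n) in IHi *.
have b_ge1 : (1 <= b)%N := leq_trans l_ge1 (l_le_iter i).
have b_le : (b <= dn n)%N := leq_trans (step_ge b) iter_le.
have thb_gt0 : 0 < theta n b.
  apply: lt_le_trans th_gt0 (theta_antitone le_N3n b_ge1 _).
  by rewrite step_ge (leq_trans iter_le (dn_le_q n)).
have b_div : diverges (fun n => iter i step (l n)).
  exact: diverges_leq l_div (fun n => leq_iter _ step_ge (leq0n i)).
rewrite iterS exprS -mulrA.
apply: le_trans (theta_step_le b_div le_Kn b_ge1 iter_le thb_gt0) _.
by rewrite ler_wpM2l // IHi.
Qed.

Lemma mn_lt_iter n z1 z2 J : 0 < z1 -> z1 <= z2 -> z2 < 1 ->
  eta ^+ J * ((z2 / (1 - z2)) / (z1 / (1 - z1))) <= 1 ->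
  (K <= n)%N -> (N3 <= n)%N -> (0 < n)%N ->
  (mn n z1 < iter J step (mn n z2).+1)%N.
Proof.
move=> z1_gt0 le_z12 z2_lt1 small le_Kn le_N3n n_gt0.
have z1_lt1 : z1 < 1 by lra.
set l := (mn n z2).+1; set a := iter J step l.
have l_le_a : (l <= a)%N := leq_iter _ step_ge (leq0n J).
have a_gt1 : (1 < a)%N by apply: leq_trans l_le_a; rewrite ltnS mn_ge1.
rewrite -(prednK (ltnW a_gt1)) ltnS.
apply: (mn_le z1_lt1); first by rewrite -ltnS prednK // ltnW.
move=> m /andP[m_ge2 m_le] lt_th; rewrite -ltnS prednK ?(ltnW a_gt1) // ltnNge.
apply/negP => le_am.
have th_gt0 : 0 < theta n m := lt_trans (threshold_gt0 z1_gt0 z1_lt1 n_gt0) lt_th.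
have m_le_dn : (m <= dn n)%N by rewrite dn_ge // (ltnW m_ge2) m_le.
have tha_ge : theta n m <= theta n a.
  by apply: theta_antitone le_N3n _ _; rewrite ?le_am ?m_le // (leq_trans _ l_le_a).
have l_div : diverges (fun n => (mn n z2).+1).
  exact: diverges_leq (mn_diverges (lt_le_trans z1_gt0 le_z12) z2_lt1) (fun n => leqnSn _).
have := theta_iter_le l_div le_Kn le_N3n (ltn0Sn _) (leq_trans le_am m_le_dn)
  (lt_le_trans th_gt0 tha_ge); rewrite -/l -/a.
have := theta_le_threshold (n := n) z2_lt1 (m := l).
rewrite ltnSn (leq_trans l_le_a (leq_trans le_am m_le)) => /(_ isT).
rewrite (threshold_ratio z1_gt0 z1_lt1 z2_lt1 n_gt0).
have := threshold_gt0 z1_gt0 z1_lt1 n_gt0.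
have := exprn_ge0 J eta_ge0.
(* theta_a <= eta^J theta_l <= eta^J c t1 <= t1 < theta_m <= theta_a *)
move: small lt_th tha_ge; nra.
Qed.

Lemma mn_comparable z1 z2 : 0 < z1 -> z1 <= z2 -> z2 < 1 ->
  exists (C : R) (N : nat), forall n, (N <= n)%N ->
    (mn n z1)%:R / (mn n z2)%:R <= C /\ (mn n z2)%:R / (mn n z1)%:R <= C.
Proof.
move=> z1_gt0 le_z12 z2_lt1.
have c_ge0 : 0 <= (z2 / (1 - z2)) / (z1 / (1 - z1)).
  by rewrite !divr_ge0 ?subr_ge0 //; lra.
have [J small] := exists_expr_mul_le1 eta_ge0 eta_lt1 c_ge0.
exists (2 * k ^+ J), (maxn (maxn K N3) 1) => n.
rewrite !geq_max => /andP[/andP[le_Kn le_N3n] n_gt0].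
have kJ_ge1 : 1 <= k ^+ J by rewrite exprn_ege1 // ltW.
have mn2_ge1 : 1 <= (mn n z2)%:R :> R by rewrite ler1n mn_ge1.
have mn1_ge1 : 1 <= (mn n z1)%:R :> R by rewrite ler1n mn_ge1.
have le_mn : (mn n z2)%:R <= (mn n z1)%:R :> R.
  by rewrite ler_nat mn_nonincreasing.
have le_iter : (mn n z1)%:R <= (iter J step (mn n z2).+1)%:R :> R.
  by rewrite ler_nat ltnW // mn_lt_iter.
have := iter_scale_floor_le J (mn n z2).+1 (ltW (lt_trans ltr01 k_gt1)).
rewrite -natr1 => iter_le.
by split; rewrite ler_pdivrMr ?(lt_le_trans ltr01) //; nra.
Qed.

End Decay.
End Assumption5.
End Selection.

Theorem lemmaA2 (R : realType)
  (mu : forall n : nat, 'cV[R]_n) (Omega : forall n : nat, 'M[R]_n)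
  (q : nat -> nat) (nu : nat -> nat -> nat) (X : forall n : nat, 'I_n -> nat -> R)
  (* setting *)
  (HOmega : forall n, pos_def (Omega n))
  (Hnu0 : forall n, nu n 0%N = 0%N)
  (Hnu_incr : forall n m, (m < q n)%N -> (nu n m < nu n m.+1)%N)
  (Hfull : forall n, \rank (Xm nu X n (q n)) = nu n (q n))
  (* Assumption 3 *)
  (HA3 : exists N : nat, forall n, (N <= n)%N ->
           forall m, (1 <= m)%N -> (m < q n)%N ->
             theta mu Omega nu X n m.+1 <= theta mu Omega nu X n m)
  (* Assumption 5 *)
  (HA5 : forall m : nat, (1 <= m)%N ->
           exists thetabar : R, 0 < thetabar /\
           exists K : nat, forall n, (K <= n)%N ->
             (m <= dn mu Omega q nu X n)%N /\ thetabar <= theta mu Omega nu X n m) :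
  (* (i) *)
  ((forall n (z1 z2 : R), 0 < z1 -> z1 <= z2 ->
       (mn mu Omega q nu X n z2 <= mn mu Omega q nu X n z1)%N)
   /\ (forall z : R, 0 < z -> z < 1 ->
       forall M : nat, exists N : nat, forall n, (N <= n)%N ->
         (M <= mn mu Omega q nu X n z)%N))
  /\
  (* (ii) *)
  ((exists (k eta : R) (K : nat), 1 < k /\ eta < 1 /\ (1 < K)%N /\
      forall l : nat -> nat,
        (forall M : nat, exists N : nat, forall n, (N <= n)%N -> (M <= l n)%N) ->
        (forall n, (l n <= dn mu Omega q nu X n)%N) ->
        forall n, (K <= n)%N ->
          theta_ext mu Omega q nu X n (Num.truncn (k * (l n)%:R))
            / theta_ext mu Omega q nu X n (l n) <= eta) ->
   forall z1 z2 : R, 0 < z1 -> z1 < 1 -> 0 < z2 -> z2 < 1 ->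
     exists (C : R) (N : nat), forall n, (N <= n)%N ->
       (mn mu Omega q nu X n z1)%:R / (mn mu Omega q nu X n z2)%:R <= C /\
       (mn mu Omega q nu X n z2)%:R / (mn mu Omega q nu X n z1)%:R <= C).
Proof.
have [N3 assumption3] := HA3.
split; first by split; [exact: mn_nonincreasing | exact: mn_diverges].
move=> [k [eta [K [k_gt1 [eta_lt1 [_ decay]]]]]].
(* Iterating the decay bound needs a nonnegative rate. *)
have eta'_ge0 : 0 <= Num.max eta 0 by rewrite le_max lexx orbT.
have eta'_lt1 : Num.max eta 0 < 1 by rewrite gt_max eta_lt1 ltr01.
have eta_le : eta <= Num.max eta 0 by rewrite le_max lexx.
have decay' := fun l l_div l_le n le_Kn =>
  le_trans (decay l l_div l_le n le_Kn) eta_le.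
have comparable z1 z2 := mn_comparable HA5 assumption3 k_gt1 eta'_ge0 eta'_lt1
  decay' (z1 := z1) (z2 := z2).
move=> z1 z2 z1_gt0 z1_lt1 z2_gt0 z2_lt1.
have [le_z12|lt_z21] := lerP z1 z2; first exact: comparable.
have [C [N HN]] := comparable z2 z1 z2_gt0 (ltW lt_z21) z1_lt1.
by exists C, N => n /HN[].
Qed.
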